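(* Let $\varepsilon>0$ and let $B$ be the closed unit ball of $C(0,1)$ (sup norm). There exists a non-negative, $1$-Lipschitz, $\varepsilon$-convex function $f:B\to\mathbb{R}$ such that for every convex function $g:B\to\mathbb{R}$, $$\sup\{|f(x)-g(x)|:x\in B\}\ge1 .$$
   Context: $C(0,1)$ is the space of continuous real functions on $[0,1]$ with the supremum norm. A function $f$ on a convex set $C$ is $\varepsilon$-convex if $f(tx+(1-t)y)\le tf(x)+(1-t)f(y)+\varepsilon$ for all $x,y\in C$, $t\in[0,1]$. *)

From Stdlib Require Import Reals Lra.
Open Scope R_scope.

Definition I01 : Type := { t : R | 0 <= t <= 1 }.

(* Points of C(0,1) are represented as functions [0,1] -> R that are continuous. *)
Definition cont01 (u : I01 -> R) : Prop :=
  forall t : I01, forall eps : R, 0 < eps ->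
    exists delta : R, 0 < delta /\
      forall s : I01, Rabs (proj1_sig s - proj1_sig t) < delta ->
        Rabs (u s - u t) < eps.

Definition supdist_le (u v : I01 -> R) (c : R) : Prop :=
  forall s : I01, Rabs (u s - v s) <= c.

Definition unit_ball (u : I01 -> R) : Prop :=
  cont01 u /\ forall s : I01, Rabs (u s) <= 1.

Definition cvx_comb (t : R) (x y : I01 -> R) : I01 -> R :=
  fun s => t * x s + (1 - t) * y s.

Definition eps_convex_on (C : (I01 -> R) -> Prop) (eps : R)
    (f : (I01 -> R) -> R) : Prop :=
  forall x y, C x -> C y -> forall t, 0 <= t <= 1 ->
    f (cvx_comb t x y) <= t * f x + (1 - t) * f y + eps.

Definition convex_on (C : (I01 -> R) -> Prop) (f : (I01 -> R) -> R) : Prop :=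
  eps_convex_on C 0 f.

(* f is 1-Lipschitz on C for the sup norm: |f x - f y| <= ||x - y||,
   i.e. |f x - f y| <= c for every upper bound c of |x - y| on [0,1]. *)
Definition one_lipschitz_on (C : (I01 -> R) -> Prop) (f : (I01 -> R) -> R) : Prop :=
  forall x y, C x -> C y -> forall c, supdist_le x y c -> Rabs (f x - f y) <= c.

(* Let u_i(s) = clamp_[-1,1] (2 cos (2 pi 4^i s)); the u_i are independent like Rademacher
   functions: every sign pattern (u_k(s))_(k<L) in {-1,1}^L occurs at some s. With
   phi(x) = -x ln x, H(p) = sum_k phi(p_k) and w = eps / ln 2, put
     f(x) = min (2, inf { w H(p) + ||x - sum_k p_k u_k|| : p a finite probability vector }).
   An infimum of distances is 1-Lipschitz, and H(t p + (1-t) q) <= t H(p) + (1-t) H(q) + ln 2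
   makes f eps-convex. Clearly f(u_i) = 0. At the average a_N of u_0, ..., u_(N-1), f is close
   to 2: only few indices carry mass >= exp(-2/w); at a point where u_k = -1 exactly on those,
   a_N is close to 1, while sum_k p_k u_k exceeds -1 by at most twice the light mass, which is
   paid for by the entropy. Jensen gives g(a_N) <= max_(i<N) g(u_i) for convex g, so g is far
   from f either at a_N or at some u_i. *)
From Stdlib Require Import Reals Lra Lia FunctionalExtensionality.
Open Scope R_scope.

Fixpoint rsum (f : nat -> R) (n : nat) : R :=
  match n with O => 0 | S n => rsum f n + f n end.

Lemma rsum_ext f g n :
  (forall k, (k < n)%nat -> f k = g k) -> rsum f n = rsum g n.
Proof.
induction n as [|n IH]; intros Hfg; simpl; [reflexivity|].
rewrite IH by (intros; apply Hfg; lia); rewrite Hfg by lia; reflexivity.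
Qed.

Lemma rsum_plus f g n : rsum (fun k => f k + g k) n = rsum f n + rsum g n.
Proof. induction n as [|n IH]; simpl; [ring|]. rewrite IH; ring. Qed.

Lemma rsum_scal a f n : rsum (fun k => a * f k) n = a * rsum f n.
Proof. induction n as [|n IH]; simpl; [ring|]. rewrite IH; ring. Qed.

Lemma rsum_const c n : rsum (fun _ => c) n = INR n * c.
Proof. induction n as [|n IH]; simpl rsum; [simpl; ring|]. rewrite IH, S_INR; ring. Qed.

Lemma rsum_le f g n :
  (forall k, (k < n)%nat -> f k <= g k) -> rsum f n <= rsum g n.
Proof.
induction n as [|n IH]; intros Hfg; simpl; [lra|].
assert (f n <= g n) by (apply Hfg; lia).
assert (rsum f n <= rsum g n) by (apply IH; intros; apply Hfg; lia).
lra.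
Qed.

Lemma rsum_nonneg f n : (forall k, 0 <= f k) -> 0 <= rsum f n.
Proof.
intros Hf; rewrite <- (Rmult_0_r (INR n)), <- rsum_const.
apply rsum_le; intros k _; apply Hf.
Qed.

Lemma rsum_mono f m n :
  (forall k, 0 <= f k) -> (m <= n)%nat -> rsum f m <= rsum f n.
Proof. intros Hf Hmn; induction Hmn as [|n Hmn IH]; simpl; [lra|]; pose proof (Hf n); lra. Qed.

Lemma rsum_term_le f k n :
  (forall j, 0 <= f j) -> (k < n)%nat -> f k <= rsum f n.
Proof.
intros Hf Hk; pose proof (rsum_nonneg f k Hf); pose proof (rsum_mono f (S k) n Hf Hk).
simpl in *; lra.
Qed.

Lemma rsum_widen f N n :
  (forall k, (N <= k)%nat -> f k = 0) -> (N <= n)%nat -> rsum f n = rsum f N.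
Proof.
intros Hf Hn; induction Hn as [|n Hn IH]; [reflexivity|]; simpl.
rewrite IH, Hf by lia; ring.
Qed.

Definition delta (i k : nat) : R := if Nat.eqb k i then 1 else 0.

Lemma rsum_delta g i : rsum (fun k => delta i k * g k) (S i) = g i.
Proof.
simpl; replace (delta i i) with 1 by (unfold delta; now rewrite Nat.eqb_refl).
rewrite (rsum_ext _ (fun _ => 0)), rsum_const; [ring|].
intros k Hk; unfold delta; destruct (Nat.eqb_spec k i); [lia|ring].
Qed.

Definition phi (x : R) : R := - x * ln x.

(* Stdlib's junk value, which makes [phi 0 = 0] hold literally. *)
Lemma ln_0 : ln 0 = 0.
Proof. unfold ln; destruct (Rlt_dec 0 0) as [H|H]; [exfalso; lra|reflexivity]. Qed.

Lemma ln_le_ln x y : 0 < x -> x <= y -> ln x <= ln y.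
Proof.
intros Hx Hxy; destruct (Req_dec x y) as [->|Hne]; [lra|].
left; apply ln_increasing; lra.
Qed.

Lemma ln_nonpos x : x <= 1 -> ln x <= 0.
Proof.
intros Hx; destruct (Rlt_dec 0 x).
- rewrite <- ln_1; apply ln_le_ln; lra.
- unfold ln; destruct (Rlt_dec 0 x); [contradiction|lra].
Qed.

Lemma phi_0 : phi 0 = 0.
Proof. unfold phi; rewrite ln_0; ring. Qed.

Lemma phi_1 : phi 1 = 0.
Proof. unfold phi; rewrite ln_1; ring. Qed.

Lemma phi_nonneg x : 0 <= x <= 1 -> 0 <= phi x.
Proof. intros Hx; unfold phi; pose proof (ln_nonpos x); nra. Qed.

Lemma phi_mul x y : 0 <= x -> 0 <= y -> phi (x * y) = x * phi y + y * phi x.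
Proof.
intros Hx Hy.
destruct (Req_dec x 0) as [->|Hx0]; [rewrite Rmult_0_l, phi_0; ring|].
destruct (Req_dec y 0) as [->|Hy0]; [rewrite Rmult_0_r, phi_0; ring|].
unfold phi; rewrite ln_mult by lra; ring.
Qed.

Lemma phi_subadd x y : 0 <= x -> 0 <= y -> phi (x + y) <= phi x + phi y.
Proof.
assert (Hpart : forall a b, 0 <= a -> 0 <= b -> a * ln a <= a * ln (a + b)).
{ intros a b Ha Hb; destruct (Req_dec a 0) as [->|Ha0]; [lra|].
  apply Rmult_le_compat_l; [lra|]; apply ln_le_ln; lra. }
intros Hx Hy; unfold phi.
pose proof (Hpart x y Hx Hy) as Hxy; pose proof (Hpart y x Hy Hx) as Hyx.
rewrite Rplus_comm in Hyx; lra.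
Qed.

(* Gibbs' inequality against the uniform distribution, via [ln u <= u - 1] at [u = 1/(2t)]. *)
Lemma phi_binary_le_ln2 t : 0 <= t <= 1 -> phi t + phi (1 - t) <= ln 2.
Proof.
intros Ht; assert (Hln2 : 0 < ln 2) by (pose proof ln_lt_2; lra).
destruct (Req_dec t 0) as [->|Ht0].
{ rewrite Rminus_0_r, phi_0, phi_1; lra. }
destruct (Req_dec t 1) as [->|Ht1].
{ rewrite Rminus_diag, phi_0, phi_1; lra. }
assert (Hgibbs : forall a, 0 < a -> a * (- ln 2 - ln a) <= / 2 - a).
{ intros a Ha; pose proof (exp_ineq1_le (ln (/ (2 * a)))) as Hexp.
  rewrite exp_ln, ln_Rinv, ln_mult in Hexp by (try apply Rinv_0_lt_compat; lra).
  assert (a * / (2 * a) = / 2) by (field; lra).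
  apply Rmult_le_compat_l with (r := a) in Hexp; lra. }
pose proof (Hgibbs t ltac:(lra)); pose proof (Hgibbs (1 - t) ltac:(lra)).
unfold phi; lra.
Qed.

Lemma mul_le_phi k x : 0 <= x <= exp (- k) -> k * x <= phi x.
Proof.
intros Hx; destruct (Req_dec x 0) as [->|Hx0]; [rewrite phi_0; lra|].
assert (ln x <= - k) by (rewrite <- (ln_exp (- k)); apply ln_le_ln; lra).
unfold phi; nra.
Qed.

Section CappedInfimum.

Variable E : R -> Prop.

(* The extra value [2] makes the infimum defined for every [E]; for the cost sets below it is
   already a cost on the unit ball, see [cost_capped]. *)
Definition capped (v : R) : Prop := v = 2 \/ (0 <= v /\ E v).

Lemma capped_opp_bound : bound (fun y => capped (- y)).
Proof. exists 0; intros y [Hy|[Hy _]]; lra. Qed.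

Lemma capped_opp_inhabited : exists y, capped (- y).
Proof. exists (-2); left; ring. Qed.

Definition capped_inf : R :=
  - proj1_sig (completeness _ capped_opp_bound capped_opp_inhabited).

Lemma capped_inf_le v : capped v -> capped_inf <= v.
Proof.
intros Hv; unfold capped_inf; destruct (completeness _ _ _) as [m Hm]; simpl.
destruct Hm as [Hub _].
assert (- v <= m) by (apply Hub; rewrite Ropp_involutive; exact Hv); lra.
Qed.

Lemma capped_inf_ge y : (forall v, capped v -> y <= v) -> y <= capped_inf.
Proof.
intros Hy; unfold capped_inf; destruct (completeness _ _ _) as [m Hm]; simpl.
destruct Hm as [_ Hlub].
assert (m <= - y); [|lra].
apply Hlub; intros z Hz; specialize (Hy _ Hz); lra.
Qed.

Lemma capped_inf_nonneg : 0 <= capped_inf.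
Proof. apply capped_inf_ge; intros v [->|[Hv _]]; lra. Qed.

Lemma capped_inf_le2 : capped_inf <= 2.
Proof. apply capped_inf_le; left; reflexivity. Qed.

Lemma capped_inf_ge_scaled t y :
  0 <= t -> (forall v, capped v -> y <= t * v) -> y <= t * capped_inf.
Proof.
intros Ht Hy; destruct (Req_dec t 0) as [Ht0|Ht0].
- specialize (Hy 2 (or_introl eq_refl)); rewrite Ht0 in *; lra.
- assert (Hyt : y / t <= capped_inf).
  { apply capped_inf_ge; intros v Hv; specialize (Hy v Hv).
    apply Rmult_le_reg_l with t; [lra|]; unfold Rdiv.
    rewrite Rmult_comm, Rmult_assoc, Rinv_l, Rmult_1_r by lra; lra. }
  apply Rmult_le_compat_l with (r := t) in Hyt; [|lra].
  unfold Rdiv in Hyt; rewrite Rmult_comm, Rmult_assoc, Rinv_l, Rmult_1_r in Hyt by lra; lra.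
Qed.

End CappedInfimum.

Lemma Rabs_le_between x b : Rabs x <= b -> - b <= x <= b.
Proof.
intros H; pose proof (Rle_abs x); pose proof (Rle_abs (- x)); rewrite Rabs_Ropp in *; lra.
Qed.

Lemma cont01_const c : cont01 (fun _ => c).
Proof. intros t eps Heps; exists 1; split; [lra|]; intros; rewrite Rminus_diag, Rabs_R0; lra. Qed.

Lemma cont01_plus x y : cont01 x -> cont01 y -> cont01 (fun s => x s + y s).
Proof.
intros Hx Hy t eps Heps.
destruct (Hx t (eps / 2)) as [d1 [Hd1 H1]]; [lra|].
destruct (Hy t (eps / 2)) as [d2 [Hd2 H2]]; [lra|].
exists (Rmin d1 d2); split; [apply Rmin_pos; lra|]; intros s Hs.
assert (A1 := H1 s ltac:(pose proof (Rmin_l d1 d2); lra)).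
assert (A2 := H2 s ltac:(pose proof (Rmin_r d1 d2); lra)).
replace (x s + y s - (x t + y t)) with ((x s - x t) + (y s - y t)) by ring.
pose proof (Rabs_triang (x s - x t) (y s - y t)); lra.
Qed.

Lemma cont01_scal a x : cont01 x -> cont01 (fun s => a * x s).
Proof.
intros Hx t eps Heps; pose proof (Rabs_pos a) as Ha.
assert (He : 0 < eps / (Rabs a + 1)) by (apply Rdiv_lt_0_compat; lra).
destruct (Hx t _ He) as [d [Hd H]].
exists d; split; [exact Hd|]; intros s Hs; specialize (H s Hs).
rewrite <- Rmult_minus_distr_l, Rabs_mult.
apply Rlt_le_trans with ((Rabs a + 1) * (eps / (Rabs a + 1))).
- pose proof (Rabs_pos (x s - x t)); nra.
- right; field; lra.
Qed.

Lemma cont01_rsum (v : nat -> I01 -> R) n :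
  (forall i, cont01 (v i)) -> cont01 (fun s => rsum (fun i => v i s) n).
Proof.
intros Hv; induction n as [|n IH]; [exact (cont01_const 0)|].
exact (cont01_plus _ _ IH (Hv n)).
Qed.

Definition average (v : nat -> I01 -> R) (N : nat) : I01 -> R :=
  fun s => / INR N * rsum (fun i => v i s) N.

Lemma average_in_ball v N :
  (1 <= N)%nat -> (forall i, unit_ball (v i)) -> unit_ball (average v N).
Proof.
intros HN Hv; assert (HNpos : 0 < INR N) by (apply lt_0_INR; lia).
split.
- apply cont01_scal, cont01_rsum; intros i; apply Hv.
- intros s; unfold average.
  assert (Hvs : forall i, -1 <= v i s <= 1) by (intros i; apply Rabs_le_between, (proj2 (Hv i))).
  assert (Hlo : rsum (fun _ => -1) N <= rsum (fun i => v i s) N)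
    by (apply rsum_le; intros i _; apply Hvs).
  assert (Hhi : rsum (fun i => v i s) N <= rsum (fun _ => 1) N)
    by (apply rsum_le; intros i _; apply Hvs).
  rewrite !rsum_const in *.
  assert (Hsum : Rabs (rsum (fun i => v i s) N) <= INR N) by (apply Rabs_le; lra).
  rewrite Rabs_mult, Rabs_right by (left; apply Rinv_0_lt_compat; lra).
  apply Rmult_le_reg_l with (INR N); [lra|].
  rewrite <- Rmult_assoc, Rinv_r, Rmult_1_l, Rmult_1_r by lra; exact Hsum.
Qed.

Lemma convex_average_le (g : (I01 -> R) -> R) (v : nat -> I01 -> R) N :
  convex_on unit_ball g -> (forall i, unit_ball (v i)) -> (1 <= N)%nat ->
  exists i, (i < N)%nat /\ g (average v N) <= g (v i).
Proof.
intros Hg Hv HN; induction HN as [|N HN IH].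
- exists O; split; [lia|].
  replace (average v 1) with (v O); [lra|].
  apply functional_extensionality; intros s; unfold average; simpl; field.
- destruct IH as [i [Hi Hgi]].
  assert (HNpos : 0 < INR N) by (apply lt_0_INR; lia).
  set (t := / INR (S N)).
  assert (Ht : 0 <= t <= 1).
  { unfold t; rewrite S_INR; split; [left; apply Rinv_0_lt_compat; lra|].
    rewrite <- Rinv_1; apply Rinv_le_contravar; lra. }
  assert (Hstep : average v (S N) = cvx_comb t (v N) (average v N)).
  { apply functional_extensionality; intros s.
    unfold average, cvx_comb, t; simpl rsum; rewrite S_INR; field; lra. }
  pose proof (Hg _ _ (Hv N) (average_in_ball v N HN Hv) t Ht) as Hconv.
  rewrite <- Hstep in Hconv.
  destruct (Rle_dec (g (average v N)) (g (v N))).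
  + exists N; split; [lia|nra].
  + exists i; split; [lia|nra].
Qed.

Definition clamp (y : R) : R := Rmax (-1) (Rmin 1 y).

Lemma clamp_bound y : Rabs (clamp y) <= 1.
Proof. unfold clamp, Rmax, Rmin; apply Rabs_le; repeat destruct Rle_dec; lra. Qed.

Lemma clamp_lipschitz a b : Rabs (clamp a - clamp b) <= Rabs (a - b).
Proof.
unfold clamp, Rmax, Rmin; repeat destruct Rle_dec;
  unfold Rabs; repeat destruct Rcase_abs; lra.
Qed.

Lemma clamp_of_ge1 y : 1 <= y -> clamp y = 1.
Proof. intros; unfold clamp, Rmax, Rmin; repeat destruct Rle_dec; lra. Qed.

Lemma clamp_of_le_m1 y : y <= -1 -> clamp y = -1.
Proof. intros; unfold clamp, Rmax, Rmin; repeat destruct Rle_dec; lra. Qed.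

Definition wave (i : nat) (s : I01) : R :=
  clamp (2 * cos (2 * PI * (4 ^ i * proj1_sig s))).

Lemma cos_cont_at a eps :
  0 < eps -> exists d, 0 < d /\ forall y, Rabs (y - a) < d -> Rabs (cos y - cos a) < eps.
Proof.
intros Heps; destruct (continuity_cos a eps Heps) as [d [Hd Hy]].
exists d; split; [exact Hd|]; intros y Hya.
destruct (Req_dec y a) as [->|Hne]; [rewrite Rminus_diag, Rabs_R0; lra|].
apply Hy; repeat split; auto.
Qed.

Lemma wave_in_ball i : unit_ball (wave i).
Proof.
split; [|intros s; apply clamp_bound].
intros t eps Heps; set (K := 2 * PI * 4 ^ i).
assert (HK : 0 < K).
{ unfold K; pose proof PI_RGT_0; pose proof (pow_lt 4 i ltac:(lra)); nra. }
destruct (cos_cont_at (K * proj1_sig t) (eps / 2)) as [d [Hd Hcos]]; [lra|].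
exists (d / K); split; [apply Rdiv_lt_0_compat; lra|]; intros s Hs.
unfold wave; eapply Rle_lt_trans; [apply clamp_lipschitz|].
replace (2 * PI * (4 ^ i * proj1_sig s)) with (K * proj1_sig s) by (unfold K; ring).
replace (2 * PI * (4 ^ i * proj1_sig t)) with (K * proj1_sig t) by (unfold K; ring).
rewrite <- Rmult_minus_distr_l, Rabs_mult, (Rabs_right 2) by lra.
enough (Rabs (cos (K * proj1_sig s) - cos (K * proj1_sig t)) < eps / 2) by lra.
apply Hcos.
rewrite <- Rmult_minus_distr_l, Rabs_mult, (Rabs_right K) by lra.
apply Rmult_lt_reg_l with (/ K); [apply Rinv_0_lt_compat; lra|].
rewrite <- Rmult_assoc, Rinv_l, Rmult_1_l by lra; unfold Rdiv in Hs; lra.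
Qed.

(* [base4 b i n] is [sum_(j<n) d_(i+j) 4^-j] with digits [d_k = 1/2] if [b k] and [0] otherwise. *)
Fixpoint base4 (b : nat -> bool) (i n : nat) : R :=
  match n with
  | O => 0
  | S n => (if b i then / 2 else 0) + base4 b (S i) n / 4
  end.

Lemma base4_bound b n : forall i, 0 <= base4 b i n <= 2 / 3.
Proof.
induction n as [|n IH]; intros i; simpl; [lra|].
specialize (IH (S i)); destruct (b i); lra.
Qed.

Lemma base4_shift b i : forall n, exists K : nat,
  4 ^ i * base4 b 0 (i + n) = INR K + base4 b i n.
Proof.
induction i as [|i IH]; intros n; [exists O; simpl; ring|].
destruct (IH (S n)) as [K HK]; replace (S i + n)%nat with (i + S n)%nat by lia.
exists (4 * K + (if b i then 2 else 0))%nat.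
simpl pow; rewrite Rmult_assoc, HK, plus_INR, mult_INR; simpl base4.
destruct (b i); simpl INR; field.
Qed.

(* At [s = base4 b 0 L] the angle [2 pi 4^k s] is, modulo [2 pi], within [pi/3] of [pi]
   when [b k] and of [0] otherwise, so [2 cos] of it is at most [-1], resp. at least [1]. *)
Lemma wave_sign_pattern (b : nat -> bool) L :
  exists s : I01, forall k, (k < L)%nat -> wave k s = if b k then -1 else 1.
Proof.
pose proof (base4_bound b L 0) as Hs.
exists (exist (fun t => 0 <= t <= 1) (base4 b 0 L) ltac:(lra)); intros k Hk; unfold wave; simpl.
replace L with (k + S (L - S k))%nat by lia.
destruct (base4_shift b k (S (L - S k))) as [K ->]; simpl base4.
pose proof (base4_bound b (L - S k) (S k)) as Hr.
set (r := base4 b (S k) (L - S k)) in *.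
assert (Hcos : 1 / 2 <= cos (2 * PI * (r / 4))).
{ rewrite <- cos_PI3; pose proof PI_RGT_0; apply cos_decr_1; nra. }
destruct (b k).
- replace (2 * PI * (INR K + (/ 2 + r / 4))) with (2 * PI * (r / 4) + PI + 2 * INR K * PI) by field.
  rewrite cos_period, neg_cos; apply clamp_of_le_m1; lra.
- replace (2 * PI * (INR K + (0 + r / 4))) with (2 * PI * (r / 4) + 2 * INR K * PI) by ring.
  rewrite cos_period; apply clamp_of_ge1; lra.
Qed.

Definition prob (N : nat) (p : nat -> R) : Prop :=
  (forall k, 0 <= p k) /\ (forall k, (N <= k)%nat -> p k = 0) /\ rsum p N = 1.

Definition mixture (p : nat -> R) (N : nat) : I01 -> R :=
  fun s => rsum (fun k => p k * wave k s) N.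

Definition entropy (p : nat -> R) (N : nat) : R := rsum (fun k => phi (p k)) N.

Lemma prob_le1 N p k : prob N p -> p k <= 1.
Proof.
intros [Hp [Hsupp Hsum]]; destruct (Nat.lt_ge_cases k N) as [Hk|Hk].
- rewrite <- Hsum; apply rsum_term_le; assumption.
- rewrite Hsupp by exact Hk; lra.
Qed.

Lemma entropy_nonneg N p : prob N p -> 0 <= entropy p N.
Proof.
intros Hp; apply rsum_nonneg; intros k; apply phi_nonneg.
split; [apply Hp|apply (prob_le1 N p k Hp)].
Qed.

Lemma prob_delta i : prob (S i) (delta i).
Proof.
split; [|split].
- intros k; unfold delta; destruct (Nat.eqb k i); lra.
- intros k Hk; unfold delta; destruct (Nat.eqb_spec k i); [lia|reflexivity].
- rewrite <- (rsum_delta (fun _ => 1) i); apply rsum_ext; intros; ring.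
Qed.

Lemma mixture_delta i : mixture (delta i) (S i) = wave i.
Proof. apply functional_extensionality; intros s; apply rsum_delta. Qed.

Lemma entropy_delta i : entropy (delta i) (S i) = 0.
Proof.
rewrite <- (rsum_delta (fun _ => 0) i); apply rsum_ext; intros k _.
unfold delta; destruct (Nat.eqb k i); [rewrite phi_1|rewrite phi_0]; ring.
Qed.

Lemma prob_widen N M p : prob N p -> (N <= M)%nat ->
  prob M p /\ mixture p M = mixture p N /\ entropy p M = entropy p N.
Proof.
intros [Hp [Hsupp Hsum]] HNM; split; [|split].
- split; [exact Hp|split].
  + intros k Hk; apply Hsupp; lia.
  + rewrite (rsum_widen p N M Hsupp HNM); exact Hsum.
- apply functional_extensionality; intros s; apply rsum_widen; [|exact HNM].
  intros k Hk; rewrite Hsupp by exact Hk; ring.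
- apply rsum_widen; [|exact HNM]; intros k Hk; rewrite Hsupp by exact Hk; apply phi_0.
Qed.

Section ConvexCombination.

Variables (N : nat) (p q : nat -> R) (t : R).
Hypotheses (Hp : prob N p) (Hq : prob N q) (Ht : 0 <= t <= 1).

Let r (k : nat) : R := t * p k + (1 - t) * q k.

Lemma prob_convex_comb : prob N r.
Proof.
destruct Hp as [Hp0 [Hpsupp Hpsum]]; destruct Hq as [Hq0 [Hqsupp Hqsum]].
unfold r; split; [|split].
- intros k; pose proof (Hp0 k); pose proof (Hq0 k); nra.
- intros k Hk; rewrite Hpsupp, Hqsupp by exact Hk; ring.
- rewrite rsum_plus, !rsum_scal, Hpsum, Hqsum; ring.
Qed.

Lemma mixture_convex_comb : mixture r N = cvx_comb t (mixture p N) (mixture q N).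
Proof.
apply functional_extensionality; intros s; unfold mixture, cvx_comb, r.
rewrite <- !rsum_scal, <- rsum_plus; apply rsum_ext; intros; ring.
Qed.

(* [phi] is subadditive and [phi (t a) = t phi a + a phi t], so mixing costs at most
   the binary entropy [phi t + phi (1 - t)] of the weights. *)
Lemma entropy_convex_comb_le :
  entropy r N <= t * entropy p N + (1 - t) * entropy q N + ln 2.
Proof.
destruct Hp as [Hp0 [_ Hpsum]]; destruct Hq as [Hq0 [_ Hqsum]].
apply Rle_trans with
  (rsum (fun k => t * phi (p k) + (1 - t) * phi (q k) + (phi t * p k + phi (1 - t) * q k)) N).
- apply rsum_le; intros k _; unfold r.
  pose proof (Hp0 k); pose proof (Hq0 k).
  pose proof (phi_mul t (p k) ltac:(lra) ltac:(lra)).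
  pose proof (phi_mul (1 - t) (q k) ltac:(lra) ltac:(lra)).
  assert (phi (t * p k + (1 - t) * q k) <= phi (t * p k) + phi ((1 - t) * q k))
    by (apply phi_subadd; nra).
  lra.
- unfold entropy; rewrite !rsum_plus, !rsum_scal, Hpsum, Hqsum.
  pose proof (phi_binary_le_ln2 t Ht); lra.
Qed.

End ConvexCombination.

Lemma supdist_nonneg x y r : supdist_le x y r -> 0 <= r.
Proof.
intros H; set (s0 := exist (fun t => 0 <= t <= 1) 0 ltac:(lra)).
pose proof (H s0); pose proof (Rabs_pos (x s0 - y s0)); lra.
Qed.

Definition heavy (th : R) (p : nat -> R) (k : nat) : bool :=
  if Rle_dec th (p k) then true else false.

Lemma heavy_count_le th N M p : 0 < th -> prob M p ->
  rsum (fun k => if heavy th p k then 1 else 0) N <= / th.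
Proof.
intros Hth Hp; apply Rle_trans with (rsum (fun k => / th * p k) N).
- apply rsum_le; intros k _; unfold heavy; destruct (Rle_dec th (p k)).
  + apply Rmult_le_reg_l with th; [lra|].
    rewrite <- Rmult_assoc, Rinv_r, Rmult_1_l by lra; lra.
  + pose proof (proj1 Hp k); pose proof (Rinv_0_lt_compat th Hth); nra.
- rewrite rsum_scal; pose proof (Rinv_0_lt_compat th Hth).
  destruct Hp as [Hp0 [Hsupp Hsum]].
  assert (rsum p N <= 1).
  { rewrite <- Hsum, <- (rsum_widen p M (N + M) Hsupp) by lia.
    apply rsum_mono; [exact Hp0|lia]. }
  nra.
Qed.

Lemma light_mass_le_entropy k M p : prob M p ->
  k * rsum (fun j => if heavy (exp (- k)) p j then 0 else p j) M <= entropy p M.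
Proof.
intros Hp; rewrite <- rsum_scal; apply rsum_le; intros j _.
pose proof (proj1 Hp j); pose proof (prob_le1 M p j Hp).
unfold heavy; destruct (Rle_dec (exp (- k)) (p j)).
- rewrite Rmult_0_r; apply phi_nonneg; lra.
- apply mul_le_phi; lra.
Qed.

Section Construction.

Variable w : R.
Hypothesis w_pos : 0 < w.

Definition cost (x : I01 -> R) (v : R) : Prop :=
  exists N p r, prob N p /\ supdist_le x (mixture p N) r /\ v = w * entropy p N + r.

Definition F (x : I01 -> R) : R := capped_inf (cost x).

Lemma cost_nonneg x v : cost x v -> 0 <= v.
Proof.
intros [N [p [r [Hp [Hr ->]]]]].
pose proof (supdist_nonneg _ _ _ Hr); pose proof (entropy_nonneg N p Hp); nra.
Qed.

Lemma cost_wave i : cost (wave i) 0.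
Proof.
exists (S i), (delta i), 0; split; [apply prob_delta|split].
- intros s; rewrite mixture_delta, Rminus_diag, Rabs_R0; lra.
- rewrite entropy_delta; ring.
Qed.

Lemma cost_capped x v : (forall s, Rabs (x s) <= 1) -> capped (cost x) v -> cost x v.
Proof.
intros Hx [->|[_ Hv]]; [|exact Hv].
exists 1%nat, (delta 0), 2; split; [apply prob_delta|split].
- intros s; rewrite mixture_delta; unfold Rminus.
  pose proof (Rabs_triang (x s) (- wave 0 s)); rewrite Rabs_Ropp in *.
  pose proof (Hx s); pose proof (proj2 (wave_in_ball 0) s); lra.
- rewrite entropy_delta; ring.
Qed.

Lemma cost_shift x y c v : supdist_le x y c -> cost y v -> cost x (v + c).
Proof.
intros Hxy [N [p [r [Hp [Hr ->]]]]]; exists N, p, (r + c); split; [exact Hp|split; [|ring]].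
intros s; replace (x s - mixture p N s) with ((x s - y s) + (y s - mixture p N s)) by ring.
pose proof (Rabs_triang (x s - y s) (y s - mixture p N s)).
specialize (Hxy s); specialize (Hr s); lra.
Qed.

Lemma cost_convex_comb x y t a b : 0 <= t <= 1 -> cost x a -> cost y b ->
  exists v, cost (cvx_comb t x y) v /\ v <= t * a + (1 - t) * b + w * ln 2.
Proof.
intros Ht [N [p [r [Hp [Hr ->]]]]] [N' [q [r' [Hq [Hr' ->]]]]].
set (M := Nat.max N N').
destruct (prob_widen N M p Hp ltac:(lia)) as [HpM [Hmixp Hentp]].
destruct (prob_widen N' M q Hq ltac:(lia)) as [HqM [Hmixq Hentq]].
rewrite <- Hmixp in Hr; rewrite <- Hmixq in Hr'; rewrite <- Hentp, <- Hentq.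
exists (w * entropy (fun k => t * p k + (1 - t) * q k) M + (t * r + (1 - t) * r')); split.
- exists M, (fun k => t * p k + (1 - t) * q k), (t * r + (1 - t) * r').
  split; [exact (prob_convex_comb M p q t HpM HqM Ht)|split; [|reflexivity]].
  intros s; rewrite mixture_convex_comb; unfold cvx_comb.
  replace (t * x s + (1 - t) * y s - (t * mixture p M s + (1 - t) * mixture q M s))
    with (t * (x s - mixture p M s) + (1 - t) * (y s - mixture q M s)) by ring.
  eapply Rle_trans; [apply Rabs_triang|].
  rewrite !Rabs_mult, (Rabs_right t), (Rabs_right (1 - t)) by lra.
  specialize (Hr s); specialize (Hr' s); nra.
- pose proof (entropy_convex_comb_le M p q t HpM HqM Ht); nra.
Qed.

Lemma F_nonneg x : 0 <= F x.
Proof. apply capped_inf_nonneg. Qed.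

Lemma F_wave i : F (wave i) <= 0.
Proof. apply capped_inf_le; right; split; [lra|apply cost_wave]. Qed.

Lemma F_le_shift x y c : supdist_le x y c -> F x <= F y + c.
Proof.
intros Hxy; pose proof (supdist_nonneg _ _ _ Hxy).
enough (F x - c <= F y) by lra.
apply capped_inf_ge; intros v [->|[_ Hv]].
- pose proof (capped_inf_le2 (cost x)); unfold F; lra.
- enough (F x <= v + c) by lra.
  apply capped_inf_le; right; split.
  + pose proof (cost_nonneg y v Hv); lra.
  + exact (cost_shift x y c v Hxy Hv).
Qed.

Lemma F_one_lipschitz : one_lipschitz_on unit_ball F.
Proof.
intros x y _ _ c Hxy; apply Rabs_le.
assert (Hyx : supdist_le y x c) by (intros s; rewrite Rabs_minus_sym; apply Hxy).
pose proof (F_le_shift x y c Hxy); pose proof (F_le_shift y x c Hyx); lra.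
Qed.

Lemma F_eps_convex : eps_convex_on unit_ball (w * ln 2) F.
Proof.
intros x y [_ Hx] [_ Hy] t Ht; set (z := cvx_comb t x y).
assert (Hab : forall a b, capped (cost x) a -> capped (cost y) b ->
          F z <= t * a + (1 - t) * b + w * ln 2).
{ intros a b Ha Hb.
  destruct (cost_convex_comb x y t a b Ht (cost_capped x a Hx Ha) (cost_capped y b Hy Hb))
    as [v [Hv Hle]].
  enough (F z <= v) by lra.
  apply capped_inf_le; right; split; [exact (cost_nonneg z v Hv)|exact Hv]. }
assert (Hb : forall b, capped (cost y) b -> F z - (1 - t) * b - w * ln 2 <= t * F x).
{ intros b Hb; apply capped_inf_ge_scaled; [lra|].
  intros a Ha; pose proof (Hab a b Ha Hb); lra. }
enough (F z - t * F x - w * ln 2 <= (1 - t) * F y) by lra.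
apply capped_inf_ge_scaled; [lra|]; intros b Hb'; pose proof (Hb b Hb'); lra.
Qed.

Lemma F_average_wave_ge N : (1 <= N)%nat ->
  2 - 2 / (INR N * exp (- (2 / w))) <= F (average wave N).
Proof.
intros HN; set (th := exp (- (2 / w))).
assert (Hth : 0 < th) by apply exp_pos.
assert (HNpos : 0 < INR N) by (apply lt_0_INR; lia).
assert (Hgap : 0 < 2 / (INR N * th)) by (apply Rdiv_lt_0_compat; nra).
apply capped_inf_ge; intros v [->|[_ [M [p [r [Hp [Hr ->]]]]]]]; [lra|].
set (b := heavy th p).
set (heavy_ind := fun k => if b k then 1 else 0).
set (light := fun k => if b k then 0 else p k).
destruct (wave_sign_pattern b (M + N)) as [s Hs].
assert (Havg : average wave N s = 1 - 2 / INR N * rsum heavy_ind N).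
{ unfold average; rewrite (rsum_ext _ (fun k => 1 + -2 * heavy_ind k)).
  - rewrite rsum_plus, rsum_scal, rsum_const; field; lra.
  - intros k Hk; rewrite Hs by lia; unfold heavy_ind; destruct (b k); ring. }
assert (Hmix : mixture p M s = -1 + 2 * rsum light M).
{ unfold mixture; rewrite (rsum_ext _ (fun k => -1 * p k + 2 * light k)).
  - rewrite rsum_plus, !rsum_scal, (proj2 (proj2 Hp)); ring.
  - intros k Hk; rewrite Hs by lia; unfold light; destruct (b k); ring. }
assert (Hcount : 2 / INR N * rsum heavy_ind N <= 2 / (INR N * th)).
{ replace (2 / (INR N * th)) with (2 / INR N * / th) by (field; lra).
  apply Rmult_le_compat_l; [left; apply Rdiv_lt_0_compat; lra|].
  exact (heavy_count_le th N M p Hth Hp). }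
assert (Hlight : 2 * rsum light M <= w * entropy p M).
{ pose proof (light_mass_le_entropy (2 / w) M p Hp) as Hent; fold th in Hent.
  apply Rmult_le_compat_l with (r := w) in Hent; [|lra].
  rewrite <- Rmult_assoc in Hent; replace (w * (2 / w)) with 2 in Hent by (field; lra).
  exact Hent. }
specialize (Hr s); pose proof (Rle_abs (average wave N s - mixture p M s)); lra.
Qed.

Lemma F_far_from_convex (g : (I01 -> R) -> R) c :
  convex_on unit_ball g -> c < 1 -> exists x, unit_ball x /\ c < Rabs (F x - g x).
Proof.
intros Hg Hc; set (th := exp (- (2 / w))).
assert (Hth : 0 < th) by apply exp_pos.
destruct (INR_unbounded (4 / (th * (1 - c)))) as [N HN].
assert (Hbig : 0 < 4 / (th * (1 - c))) by (apply Rdiv_lt_0_compat; nra).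
assert (HN1 : (1 <= N)%nat) by (destruct N; [simpl in HN; lra|lia]).
assert (HNpos : 0 < INR N) by (apply lt_0_INR; lia).
assert (Hprod : 4 < INR N * (th * (1 - c))).
{ apply Rmult_lt_compat_r with (r := th * (1 - c)) in HN; [|nra].
  unfold Rdiv in HN; rewrite Rmult_assoc, Rinv_l, Rmult_1_r in HN by nra; lra. }
assert (Hgap : 2 / (INR N * th) < (1 - c) / 2).
{ apply Rmult_lt_reg_l with (2 * INR N * th); [nra|].
  replace (2 * INR N * th * (2 / (INR N * th))) with 4 by (field; nra); nra. }
pose proof (F_average_wave_ge N HN1) as Havg; fold th in Havg.
destruct (convex_average_le g wave N Hg wave_in_ball HN1) as [i [_ Hgi]].
destruct (Rlt_dec (g (average wave N)) ((1 + c) / 2)).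
- exists (average wave N); split; [exact (average_in_ball wave N HN1 wave_in_ball)|].
  eapply Rlt_le_trans; [|apply Rle_abs]; lra.
- exists (wave i); split; [apply wave_in_ball|].
  pose proof (F_wave i); rewrite Rabs_minus_sym.
  eapply Rlt_le_trans; [|apply Rle_abs]; lra.
Qed.

End Construction.

Theorem corollary7p11 (eps : R) (heps : 0 < eps) :
  exists f : (I01 -> R) -> R,
    (forall x, unit_ball x -> 0 <= f x) /\
    one_lipschitz_on unit_ball f /\
    eps_convex_on unit_ball eps f /\
    forall g : (I01 -> R) -> R, convex_on unit_ball g ->
      (* sup { |f x - g x| : x in B } >= 1 *)
      forall c : R, c < 1 -> exists x, unit_ball x /\ c < Rabs (f x - g x).
Proof.
assert (Hln2 : 0 < ln 2) by (pose proof ln_lt_2; lra).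
set (w := eps / ln 2); assert (Hw : 0 < w) by (apply Rdiv_lt_0_compat; lra).
exists (F w); split; [|split; [|split]].
- intros x _; apply F_nonneg.
- exact (F_one_lipschitz w Hw).
- replace eps with (w * ln 2) by (unfold w; field; lra); exact (F_eps_convex w Hw).
- intros g Hg c Hc; exact (F_far_from_convex w Hw g c Hg Hc).
Qed.
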